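(* Let $\mathcal{I}=(I,w,v,m,k)$ be a CMK instance, $S\subseteq I$, and $\delta\in(0,0.1)$ with $\delta^{-1}\in\mathbb{N}$. Let $L=\{i\in S:\tilde w(i)\ge\delta\}$. Then for every $y\in([0,1]\cap\mathbb{Q})^I$ with $\mathrm{supp}(y)\subseteq S\setminus L$ there is a fractional solution $x$ such that $\mathrm{cover}(x)=y$ and $\|x\|\le 2\sum_{i\in I}y_i\,\tilde w(i)+1$.
   Context: A CMK instance is a tuple $\mathcal{I}=(I,w,v,m,k)$ with $I$ a finite item set, $w:I\to[0,1]$, $v:I\to\mathbb{R}_{\ge0}$, $m,k\in\mathbb{N}_{>0}$. The adjusted weight of $i\in I$ is $\tilde w(i)=w(i)+\frac1k$. A configuration is $C\subseteq I$ with $|C|\le k$ and $\sum_{i\in C}w(i)\le1$; $\mathcal{C}$ is the set of configurations and $\mathcal{C}(i)=\{C\in\mathcal{C}:i\in C\}$. A fractional solution is $x\in\mathbb{R}_{\ge0}^{\mathcal{C}}$; $\mathrm{cover}_i(x)=\sum_{C\in\mathcal{C}(i)}x_C$ and $\|x\|=\sum_{C}x_C$. $\mathrm{supp}(y)=\{i:y_i\ne0\}$. *)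

From HB Require Import structures.
From mathcomp Require Import all_boot all_order all_algebra.
From mathcomp Require Import reals.
Set Implicit Arguments. Unset Strict Implicit. Unset Printing Implicit Defensive.
Import Order.TTheory GRing.Theory Num.Theory.
Local Open Scope ring_scope.

Section CMK.
Variables (R : realType) (I : finType) (w : I -> R) (k : nat).

Definition adj_weight (i : I) : R := w i + k%:R^-1.

Definition is_config (C : {set I}) : bool :=
  (#|C| <= k)%N && (\sum_(i in C) w i <= 1).

(* A fractional solution x ∈ R_{>=0}^{configurations}, represented as a
   function on all subsets that is nonnegative and vanishes outside the
   set of configurations. *)
Definition frac_sol (x : {set I} -> R) : Prop :=
  (forall C, 0 <= x C) /\ (forall C, ~~ is_config C -> x C = 0).

Definition cmk_cover (x : {set I} -> R) (i : I) : R :=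
  \sum_(C : {set I} | is_config C && (i \in C)) x C.

Definition frac_norm (x : {set I} -> R) : R :=
  \sum_(C : {set I} | is_config C) x C.
End CMK.

From HB Require Import structures.
From mathcomp Require Import all_boot all_order all_algebra.
From mathcomp Require Import reals lra ring.
Import Order.TTheory GRing.Theory Num.Theory.
Set Implicit Arguments. Unset Strict Implicit. Unset Printing Implicit Defensive.
Local Open Scope ring_scope.

(** Items are inserted greedily, one at a time, while maintaining a nonnegative
    mass distribution of total [1 + 2 sum_j y_j w~(j)] on sets of adjusted load
    [sum_(j in C) w~(j)] at most 1 (such sets are configurations), covering every
    item inserted so far exactly [y_j] times.  To insert an item [i] with
    [w~(i) <= 1/2], call a set roomy if it misses [i] and still has room for it.
    A set that is not roomy (and misses [i]) has load above [1/2], and the total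
    load of the distribution is [sum_j w~(j) cover_j <= sum_j y_j w~(j)], so the
    non-roomy sets carry mass at most [2 sum_j y_j w~(j)]: the roomy sets carry
    mass [M >= 1].  Moving the fraction [y_i / M <= 1] of the mass of every roomy
    set [C] to [C + i] covers [i] exactly [y_i] times and changes nothing else. *)

Section Load.
Variables (R : realType) (I : finType) (w : I -> R) (k : nat).

Definition load (C : {set I}) : R := \sum_(j in C) adj_weight w k j.

Lemma load_setD1 (C : {set I}) i :
  i \in C -> load C = adj_weight w k i + load (C :\ i).
Proof. by move=> iC; rewrite /load (big_setD1 i iC). Qed.

Lemma sum_mul_load (x : {set I} -> R) :
  \sum_(C : {set I}) x C * load C
  = \sum_(j : I) adj_weight w k j * \sum_(C : {set I} | j \in C) x C.
Proof.
under eq_bigr => C _ do rewrite /load mulr_sumr big_mkcond /=.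
rewrite exchange_big; apply: eq_bigr => j _.
by rewrite mulr_sumr [RHS]big_mkcond; apply: eq_bigr => C _; case: ifP; rewrite // mulrC.
Qed.

Hypothesis w_ge0 : forall i, 0 <= w i.

Lemma adj_weight_ge0 i : 0 <= adj_weight w k i.
Proof. by rewrite addr_ge0 // invr_ge0 ler0n. Qed.

Lemma load_ge0 C : 0 <= load C.
Proof. by apply: sumr_ge0 => j _; exact: adj_weight_ge0. Qed.

(* The [1/k] summands of the load count the elements of [C]. *)
Lemma load_le1_config C : (0 < k)%N -> load C <= 1 -> is_config w k C.
Proof.
move=> k_gt0 loadC.
have loadE : load C = \sum_(j in C) w j + #|C|%:R / k%:R.
  by rewrite /load /adj_weight big_split /= sumr_const mulr_natl.
have wC_ge0 : 0 <= \sum_(j in C) w j by exact: sumr_ge0.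
have k_pos : 0 < k%:R :> R by rewrite ltr0n.
have card_ge0 : 0 <= #|C|%:R / k%:R :> R by rewrite divr_ge0 // ler0n.
apply/andP; split; last by lra.
have : #|C|%:R / k%:R <= 1 :> R by lra.
by rewrite ler_pdivrMr // mul1r ler_nat.
Qed.

Lemma sum_config (x : {set I} -> R) (P : pred {set I}) :
  (forall C, ~~ is_config w k C -> x C = 0) ->
  \sum_(C | is_config w k C && P C) x C = \sum_(C | P C) x C.
Proof.
move=> x_config; rewrite [RHS](bigID (is_config w k)) /= [X in _ + X]big1.
  by rewrite addr0; apply: eq_bigl => C; rewrite andbC.
by move=> C /andP[_]; exact: x_config.
Qed.

End Load.

Lemma sum_mem_setU1 (V : nmodType) (I : finType) (F : {set I} -> V)
    (P : pred {set I}) i :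
  \sum_(C | P C && (i \in C)) F C
  = \sum_(D | P (i |: D) && (i \notin D)) F (i |: D).
Proof.
rewrite (reindex_onto (fun D => i |: D) (fun C => C :\ i)); last first.
  by move=> C /andP[_ iC]; rewrite setD1K.
apply: eq_bigl => D; rewrite setU11 andbT.
have [iD|iD] /= := boolP (i \in D); last by rewrite setU1K // eqxx andbT.
rewrite andbF; apply/negbTE; rewrite negb_and; apply/orP; right.
by apply: contraTneq iD => <-; rewrite setD11.
Qed.

Section ShiftMass.
Variables (R : comPzRingType) (I : finType).
Variables (i : I) (roomy : pred {set I}) (t : R) (x : {set I} -> R).

Definition shift_mass (C : {set I}) : R :=
  if i \in C then (if roomy (C :\ i) then t * x (C :\ i) else 0)
  else (if roomy C then (1 - t) * x C else x C).

Lemma shift_mass_setU1 (D : {set I}) :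
  i \notin D -> shift_mass (i |: D) = if roomy D then t * x D else 0.
Proof. by move=> iD; rewrite /shift_mass setU11 setU1K. Qed.

Hypothesis x_mem0 : forall C : {set I}, i \in C -> x C = 0.

Lemma sum_shift_mass (P : pred {set I}) :
  (forall D, P (i |: D) = P D) ->
  \sum_(C | P C) shift_mass C = \sum_(C | P C) x C.
Proof.
move=> P_setU1.
rewrite (bigID (fun C : {set I} => i \in C)) [RHS](bigID (fun C : {set I} => i \in C)) /=.
rewrite [in RHS]big1 ?add0r; last by move=> C /andP[_]; exact: x_mem0.
rewrite sum_mem_setU1.
rewrite (eq_big (fun D => P D && (i \notin D)) (fun D => if roomy D then t * x D else 0));
  [|by move=> D; rewrite P_setU1|by move=> D /andP[_ iD]; rewrite shift_mass_setU1].
rewrite -big_split /=; apply: eq_bigr => C /andP[_ iC].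
by rewrite /shift_mass (negbTE iC); case: (roomy C); ring.
Qed.

Lemma cover_shift_mass :
  (forall C : {set I}, roomy C -> i \notin C) ->
  \sum_(C : {set I} | i \in C) shift_mass C = t * \sum_(C : {set I} | roomy C) x C.
Proof.
move=> roomy_notin.
rewrite (@sum_mem_setU1 _ _ _ predT) (bigID roomy) /= [X in _ + X]big1 ?addr0;
  last by move=> D /andP[iD /negbTE rD]; rewrite shift_mass_setU1 // rD.
rewrite mulr_sumr; apply: eq_big => [D|D /andP[iD rD]]; last first.
  by rewrite shift_mass_setU1 // rD.
by case: (boolP (roomy D)) => [rD|_]; rewrite ?andbF // roomy_notin.
Qed.

End ShiftMass.

Section GreedyInsertion.
Variables (R : realType) (I : finType) (w : I -> R) (k : nat) (y : I -> R).
Hypothesis w_ge0 : forall i, 0 <= w i.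
Hypothesis y_ge0 : forall j, 0 <= y j.

Definition mass_budget : R := 1 + 2 * \sum_(j : I) y j * adj_weight w k j.

Definition partial_cover (s : seq I) (x : {set I} -> R) : Prop :=
  [/\ forall C, 0 <= x C,
      forall C, 1 < load w k C -> x C = 0,
      \sum_(C : {set I}) x C = mass_budget &
      forall j, \sum_(C : {set I} | j \in C) x C = if j \in s then y j else 0].

Definition has_room (i : I) (C : {set I}) : bool :=
  (i \notin C) && (load w k C + adj_weight w k i <= 1).

Lemma partial_cover_nil : exists x, partial_cover [::] x.
Proof.
have budget_ge0 : 0 <= mass_budget.
  have : 0 <= \sum_(j : I) y j * adj_weight w k j.
    by apply: sumr_ge0 => j _; rewrite mulr_ge0 ?adj_weight_ge0.
  rewrite /mass_budget; lra.
exists (fun C => if C == set0 then mass_budget else 0); split.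
- by move=> C; case: ifP.
- by move=> C; case: eqP => // -> ; rewrite /load big_set0; lra.
- by rewrite (bigD1 set0) //= eqxx big1 ?addr0 // => C /negbTE ->.
- by move=> j; rewrite big1 // => C jC; case: eqP => // C0; rewrite C0 inE in jC.
Qed.

Lemma partial_cover_notin s x i (C : {set I}) :
  partial_cover s x -> i \notin s -> i \in C -> x C = 0.
Proof.
move=> [x_ge0 _ _ x_cover] i_s iC.
have := x_cover i; rewrite (negbTE i_s) => cover0.
exact: (psumr_eq0P (fun C _ => x_ge0 C) cover0 iC).
Qed.

Lemma room_mass_ge1 s x i :
  partial_cover s x -> i \notin s -> adj_weight w k i <= 1 / 2 ->
  1 <= \sum_(C | has_room i C) x C.
Proof.
move=> xs i_s small_i; have [x_ge0 _ x_mass x_cover] := xs.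
have full_mass : \sum_(C | ~~ has_room i C) x C
                 <= 2 * \sum_(j : I) y j * adj_weight w k j.
  apply: (@le_trans _ _ (\sum_(C : {set I}) 2 * (x C * load w k C))).
    rewrite big_mkcond /=; apply: ler_sum => C _.
    have x_C := x_ge0 C; have load_C := load_ge0 k w_ge0 C.
    case: ifP => [not_roomy|_]; last by rewrite !mulr_ge0.
    have [iC|iC] := boolP (i \in C).
      by rewrite (partial_cover_notin xs i_s iC) mul0r mulr0.
    have load_gt_half : 1 / 2 < load w k C.
      by move: not_roomy; rewrite negb_and iC /= -ltNge => ?; lra.
    nra.
  rewrite -mulr_sumr sum_mul_load ler_pM2l //; apply: ler_sum => j _.
  rewrite x_cover; case: ifP => _; first by rewrite mulrC.
  by rewrite mulr0 mulr_ge0 ?adj_weight_ge0.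
move: x_mass; rewrite (bigID (has_room i)) /= /mass_budget; lra.
Qed.

Hypothesis y_le1 : forall j, y j <= 1.
Hypothesis y_small : forall j, y j != 0 -> adj_weight w k j <= 1 / 2.

Lemma partial_cover_cons s x i :
  partial_cover s x -> i \notin s -> exists x', partial_cover (i :: s) x'.
Proof.
move=> xs i_s; have [x_ge0 x_load x_mass x_cover] := xs.
have [y0|y_ne0] := eqVneq (y i) 0.
  exists x; split => // j; rewrite in_cons x_cover.
  by have [->|] := eqVneq j i; rewrite //= (negbTE i_s) y0.
pose M := \sum_(C | has_room i C) x C.
have M_ge1 : 1 <= M by exact: room_mass_ge1 (y_small y_ne0).
pose t := y i / M.
have t_ge0 : 0 <= t by rewrite divr_ge0 // ?y_ge0 //; lra.
have t_le1 : t <= 1 by rewrite ler_pdivrMr; have := y_le1 i; lra.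
have x_mem0 (C : {set I}) : i \in C -> x C = 0 by exact: partial_cover_notin.
exists (shift_mass i (has_room i) t x); split.
- by move=> C; rewrite /shift_mass; do 2 case: ifP => _ //;
    rewrite mulr_ge0 ?subr_ge0.
- move=> C load_gt1; rewrite /shift_mass; case: ifP => iC.
    case: ifP => // /andP[_ roomC].
    by move: load_gt1; rewrite (load_setD1 _ _ iC); lra.
  by rewrite x_load //; case: ifP => _; rewrite ?mulr0.
- by rewrite -x_mass; apply: (sum_shift_mass _ _ x_mem0).
- move=> j; rewrite in_cons; have [->|ji] /= := eqVneq j i.
    rewrite cover_shift_mass => [|C /andP[] //].
    by rewrite -/M /t divfK //; apply: contraTneq M_ge1 => ->; rewrite ler10.
  rewrite -x_cover (sum_shift_mass _ _ x_mem0) // => D.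
  by rewrite in_setU1 (negbTE ji).
Qed.

Lemma partial_cover_exists s : uniq s -> exists x, partial_cover s x.
Proof.
elim: s => [_|i s IH /= /andP[i_s s_uniq]]; first exact: partial_cover_nil.
have [x xs] := IH s_uniq; exact: partial_cover_cons xs i_s.
Qed.

End GreedyInsertion.

Theorem lemma4p1 (R : realType) (I : finType) (w : I -> R) (v : I -> R)
    (m k : nat)
    (hw : forall i, 0 <= w i <= 1) (hv : forall i, 0 <= v i)
    (hm : (0 < m)%N) (hk : (0 < k)%N)
    (S : {set I}) (delta : R)
    (hdelta : 0 < delta < 1 / 10)
    (hdinv : exists n : nat, delta^-1 = n%:R) :
  let L := [set i in S | delta <= adj_weight w k i] in
  forall y : I -> rat,
    (forall i, 0 <= y i <= 1) ->
    (forall i, y i != 0 -> i \in S :\: L) ->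
    exists x : {set I} -> R,
      frac_sol w k x /\
      (forall i, cmk_cover w k x i = ratr (y i)) /\
      frac_norm w k x <= 2 * (\sum_(i : I) ratr (y i) * adj_weight w k i) + 1.
Proof.
move=> L y y01 y_supp.
have w_ge0 i : 0 <= w i by case/andP: (hw i).
have yr_ge0 j : 0 <= ratr (y j) :> R by rewrite ler0q; case/andP: (y01 j).
have yr_le1 j : ratr (y j) <= 1 :> R by rewrite -(rmorph1 ratr) ler_rat; case/andP: (y01 j).
have yr_small j : ratr (y j) != 0 :> R -> adj_weight w k j <= 1 / 2.
  move=> yj; have /y_supp : y j != 0 by apply: contraNneq yj => ->; rewrite rmorph0.
  rewrite !inE => /andP[not_large jS]; rewrite jS /= -ltNge in not_large.
  by case/andP: hdelta => _; lra.
have [x [x_ge0 x_load x_mass x_cover]] :=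
  partial_cover_exists w_ge0 yr_ge0 yr_le1 yr_small (enum_uniq I).
have x_config C : ~~ is_config w k C -> x C = 0.
  by move=> C_config; apply: x_load; rewrite ltNge; apply: contraNN C_config; exact: load_le1_config.
exists x; split; [by [] | split].
- by move=> j; rewrite /cmk_cover sum_config // x_cover mem_enum.
- rewrite /frac_norm -(eq_bigl _ _ (fun C => andbT _)) sum_config // x_mass.
  by rewrite /mass_budget addrC.
Qed.
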